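(* Let the setting and notation be as in the context, and suppose the Concentration Assumption and the $L_1$-Consistency Assumption hold. Assume that the (stochastic) map $\theta\mapsto \hat S(\hat{\boldsymbol\beta}_\theta)$ is either continuous with a single root $\tilde\theta$, or non-decreasing (with $\tilde\theta$ a root). Suppose further that for every $\epsilon>0$, $$\mathbf v^{*T}E_{\mathbf t}(\boldsymbol\beta^*_{\theta^*-\epsilon})\cdot \mathbf v^{*T}E_{\mathbf t}(\boldsymbol\beta^*_{\theta^*+\epsilon})<0 .$$ Then for every $\epsilon>0$, $\lim_{n\to\infty}\mathbb P^*(|\tilde\theta-\theta^*|>\epsilon)=0$.
   Context: Data: a random matrix $\mathbf Z\in\mathbb R^{n\times q}$ whose law depends on an unknown parameter; $\mathbb P^*$ denotes probability under the true parameter $\boldsymbol\beta^*\in\mathbb R^d$ (and $\mathbb E^*$ expectation). Asymptotics are as $n\to\infty$; $d$ may depend on $n$. Let $\mathbf t(\mathbf Z,\boldsymbol\beta):\mathbb R^{n\times q}\times\mathbb R^d\to\mathbb R^d$ be an estimating equation, twice differentiable in $\boldsymbol\beta$, with $E_{\mathbf t}(\boldsymbol\beta)=\lim_{n\to\infty}\mathbb E\,\mathbf t(\mathbf Z,\boldsymbol\beta)$, and $\boldsymbol\beta^*$ the unique solution of $E_{\mathbf t}(\boldsymbol\beta)=0$. Let $\mathbf T(\mathbf Z,\boldsymbol\beta)=\partial \mathbf t(\mathbf Z,\boldsymbol\beta)/\partial\boldsymbol\beta\in\mathbb R^{d\times d}$ and $E_{\mathbf T}(\boldsymbol\beta)=\lim_{n\to\infty}\mathbb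 E\,\mathbf T(\mathbf Z,\boldsymbol\beta)$, assumed invertible at $\boldsymbol\beta^*$. Write $\boldsymbol\beta=(\theta,\boldsymbol\gamma^T)^T$ with $\theta\in\mathbb R$ the first coordinate, $\boldsymbol\beta^*=(\theta^*,\boldsymbol\gamma^{*T})^T$; for any $\boldsymbol\beta=(\theta,\boldsymbol\gamma^T)^T$ and scalar $\check\theta$, $\boldsymbol\beta_{\check\theta}:=(\check\theta,\boldsymbol\gamma^T)^T$. Let $\mathbf v^{*T}$ be the first row of $[E_{\mathbf T}(\boldsymbol\beta^* )]^{-1}$. Estimators: $\hat{\boldsymbol\beta}=(\hat\theta,\hat{\boldsymbol\gamma}^T)^T=\arg\min\|\boldsymbol\beta\|_1$ subject to $\|\mathbf t(\mathbf Z,\boldsymbol\beta)\|_\infty\le\lambda$, and $\hat{\mathbf v}=\arg\min\|\mathbf v\|_1$ subject to $\|\mathbf v^T\mathbf T(\mathbf Z,\hat{\boldsymbol\beta})-\mathbf e_1\|_\infty\le\lambda'$, where $\mathbf e_1=(1,0,\dots,0)$ is a row vector and $\lambda,\lambda'>0$ are tuning parameters. Let $\hat S(\boldsymbol\beta)=\hat{\mathbf v}^T\mathbf t(\mathbf Z,\boldsymbol\beta)$; $\tilde\theta$ denotes a root of $\theta\mapsto\hat S(\hat{\boldsymbol\beta}_\theta)=\hat S(\theta,\hat{\boldsymbol\gamma})$. For a matrix $\mathbf A$, $[\mathbf A]_{-1}$ is $\mathbf A$ with its first column removed. Concentration Assumption: there is a neighborhood $\mathcal N_{\theta^*}$ of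 $\theta^*$ and functions $r_1(n,\theta),r_2(n,\theta),r_3(n,\theta)$ with $\sup_{\theta\in\mathcal N_{\theta^*}}\max_i r_i(n,\theta)=o(1)$ such that for all $\theta\in\mathcal N_{\theta^*}$: $\lim_n\mathbb P^*(\|\mathbf t(\mathbf Z,\boldsymbol\beta^*_\theta)-E_{\mathbf t}(\boldsymbol\beta^*_\theta)\|_\infty\le r_1(n,\theta))=1$; $\lim_n\mathbb P^*(|\mathbf v^{*T}\mathbf t(\mathbf Z,\boldsymbol\beta^*_\theta)-\mathbf v^{*T}E_{\mathbf t}(\boldsymbol\beta^*_\theta)|\le r_2(n,\theta))=1$; $\lim_n\mathbb P^*(\sup_{\nu\in[0,1]}\|\hat{\mathbf v}^T\mathbf T(\mathbf Z,\tilde{\boldsymbol\beta}_\nu)-\mathbf v^{*T}E_{\mathbf T}(\boldsymbol\beta^*_\theta)\|_\infty\le r_3(n,\theta))=1$ where $\tilde{\boldsymbol\beta}_\nu=\nu\hat{\boldsymbol\beta}_\theta+(1-\nu)\boldsymbol\beta^*_\theta$; and moreover $\sup_{\theta\in\mathcal N_{\theta^*}}\|E_{\mathbf t}(\boldsymbol\beta^*_\theta)\|_\infty<\infty$ and $\sup_{\theta\in\mathcal N_{\theta^*}}\|\mathbf v^{*T}[E_{\mathbf T}(\boldsymbol\beta^*_\theta)]_{-1}\|_\infty<\infty$. $L_1$-Consistency Assumption: $\lim_n\mathbb P^*(\|\hat{\boldsymbol\beta}-\boldsymbol\beta^*\|_1\le r_4(n))=1$ and $\lim_n\mathbb P^*(\|\hat{\mathbf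 v}-\mathbf v^*\|_1\le r_5(n))=1$ with $\max(r_4(n),r_5(n))=o(1)$. *)

From HB Require Import structures.
From mathcomp Require Import all_boot all_order all_algebra.
From mathcomp Require Import all_classical all_reals all_analysis.
Set Implicit Arguments. Unset Strict Implicit. Unset Printing Implicit Defensive.
Import Order.TTheory GRing.Theory Num.Theory.
Import numFieldNormedType.Exports.
Local Open Scope classical_set_scope.
Local Open Scope ring_scope.

Definition linf {R : realType} {m p : nat} (A : 'M[R]_(m, p)) : R :=
  \big[Num.max/0]_(i < m) \big[Num.max/0]_(j < p) `|A i j|.

Definition l1 {R : realType} {m p : nat} (A : 'M[R]_(m, p)) : R :=
  \sum_(i < m) \sum_(j < p) `|A i j|.

Definition dotv {R : realType} {k : nat} (u w : 'cV[R]_k) : R :=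
  \sum_(i < k) u i 0 * w i 0.

Definition setfst {R : realType} {k : nat} (b : 'cV[R]_k.+1) (th : R) : 'cV[R]_k.+1 :=
  \col_(i < k.+1) (if i == ord0 then th else b i 0).

Definition dropfirst {R : realType} {m k : nat} (A : 'M[R]_(m, k.+1)) : 'M[R]_(m, k) :=
  \matrix_(i < m, j < k) A i (lift ord0 j).

Definition e1 {R : realType} {k : nat} : 'rV[R]_k.+1 := delta_mx 0 ord0.

Definition first_row_inv {R : realType} {k : nat} (A : 'M[R]_k.+1) : 'cV[R]_k.+1 :=
  (row ord0 (invmx A))^T.

(* "with probability tending to one" (inner-probability form):
   measurable subevents A n of E n with P (A n) -> 1 *)
Definition wpa1 {d : measure_display} {T : measurableType d} {R : realType}
  (P : probability T R) (E : nat -> set T) : Prop :=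
  exists A : nat -> set T, (forall n, measurable (A n)) /\ (forall n, A n `<=` E n) /\
    ((fun n => P (A n)) @ \oo --> 1%E).

(* "P(E n) -> 0" (outer-probability form):
   measurable superevents B n of E n with P (B n) -> 0 *)
Definition prob_to0 {d : measure_display} {T : measurableType d} {R : realType}
  (P : probability T R) (E : nat -> set T) : Prop :=
  exists B : nat -> set T, (forall n, measurable (B n)) /\ (forall n, E n `<=` B n) /\
    ((fun n => P (B n)) @ \oo --> 0%E).

From HB Require Import structures.
From mathcomp Require Import all_boot all_order all_algebra.
From mathcomp Require Import all_classical all_reals all_analysis.
From mathcomp Require Import lra.
Set Implicit Arguments. Unset Strict Implicit. Unset Printing Implicit Defensive.
Import Order.TTheory GRing.Theory Num.Theory.
Import numFieldNormedType.Exports.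
Local Open Scope classical_set_scope.
Local Open Scope ring_scope.

(* A mean-value expansion of [S^(beta^_theta)] around [beta*_theta], combined with the
   concentration and L1-consistency rates, shows that at each fixed [theta] with
   [g theta <> 0] the estimated score lies, with probability tending to one, closer to
   [g theta] than [g theta] is to 0, so it has the sign of [g theta].  Applied at
   [theta* - e] and [theta* + e], where [g] changes sign, the estimated score changes
   sign too, and either root condition (continuity with a unique root, or monotonicity)
   traps [theta~] in [[theta* - e, theta* + e]].  The defining properties of the
   estimators enter only through these rate assumptions. *)

Section Norms.
Context {R : realType}.

Lemma linf_ge m p (A : 'M[R]_(m, p)) i j : `|A i j| <= linf A.
Proof.
rewrite /linf; apply: le_trans (le_bigmax _ _ i).
exact: (le_bigmax _ (fun j => `|A i j|) j).
Qed.

Lemma linf_ge0 m p (A : 'M[R]_(m, p)) : 0 <= linf A.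
Proof.
rewrite /linf; elim/big_ind: _ => // [x y hx hy|i _]; first by rewrite le_max hx.
by elim/big_ind: _ => // x y hx hy; rewrite le_max hx.
Qed.

Lemma linf_le m p (A : 'M[R]_(m, p)) c :
  0 <= c -> (forall i j, `|A i j| <= c) -> linf A <= c.
Proof. by move=> c0 Ac; apply: bigmax_le => // i _; apply: bigmax_le. Qed.

Lemma linf_leD m p (A B : 'M[R]_(m, p)) : linf A <= linf (A - B) + linf B.
Proof.
apply: linf_le => [|i j]; first by rewrite addr_ge0 // linf_ge0.
have -> : A i j = (A - B) i j + B i j by rewrite !mxE subrK.
by apply: le_trans (ler_normD _ _) _; rewrite lerD // linf_ge.
Qed.

Lemma l1_cV m (u : 'cV[R]_m) : l1 u = \sum_i `|u i 0|.
Proof. by apply: eq_bigr => i _; rewrite big_ord1. Qed.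

Lemma l1_ge0 m p (A : 'M[R]_(m, p)) : 0 <= l1 A.
Proof. by apply: sumr_ge0 => i _; apply: sumr_ge0. Qed.

Lemma mulmx_rV_cV_le m (r : 'rV[R]_m) (u : 'cV[R]_m) :
  `|(r *m u) 0 0| <= linf r * l1 u.
Proof.
rewrite mxE l1_cV mulr_sumr; apply: le_trans (ler_norm_sum _ _ _) _.
by apply: ler_sum => i _; rewrite normrM ler_wpM2r ?linf_ge.
Qed.

Lemma dotv_le m (u w : 'cV[R]_m) : `|dotv u w| <= l1 u * linf w.
Proof.
rewrite /dotv l1_cV mulr_suml; apply: le_trans (ler_norm_sum _ _ _) _.
by apply: ler_sum => i _; rewrite normrM ler_wpM2l ?linf_ge.
Qed.

Lemma dotvBl m (u v w : 'cV[R]_m) : dotv (u - v) w = dotv u w - dotv v w.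
Proof. by rewrite /dotv -sumrB; apply: eq_bigr => i _; rewrite !mxE mulrBl. Qed.

Lemma dotv_mulmx m (u w : 'cV[R]_m) : dotv u w = (u^T *m w) 0 0.
Proof. by rewrite mxE; apply: eq_bigr => i _; rewrite mxE. Qed.

Lemma setfstB_ord0 k (b b' : 'cV[R]_k.+1) th : (setfst b th - setfst b' th) ord0 0 = 0.
Proof. by rewrite !mxE eqxx subrr. Qed.

Lemma l1_setfstB k (b b' : 'cV[R]_k.+1) th :
  l1 (setfst b th - setfst b' th) <= l1 (b - b').
Proof.
rewrite !l1_cV; apply: ler_sum => i _; rewrite !mxE.
by case: ifP => _; rewrite ?subrr ?normr0.
Qed.

(* Only the columns of [r] that meet a nonzero entry of [u] matter. *)
Lemma mulmx_dropfirst_le k (r : 'rV[R]_k.+1) (u : 'cV[R]_k.+1) :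
  u ord0 0 = 0 -> `|(r *m u) 0 0| <= linf (dropfirst r) * l1 u.
Proof.
move=> u0; rewrite mxE big_ord_recl u0 mulr0 add0r l1_cV big_ord_recl u0.
rewrite normr0 add0r mulr_sumr; apply: le_trans (ler_norm_sum _ _ _) _.
apply: ler_sum => i _; rewrite normrM ler_wpM2r //.
by have := linf_ge (dropfirst r) 0 i; rewrite mxE.
Qed.

End Norms.

Section MeanValue.
Context {R : realType} {m : nat}.

Lemma dotv_differentiable (v x : 'cV[R]_m) : differentiable (dotv v) x.
Proof.
have -> : dotv v = \sum_(i < m) (v i 0 *: (fun w : 'cV[R]_m => w i 0)).
  by apply/funext => w; rewrite /dotv fct_sumE; apply: eq_bigr.
by apply: differentiable_sum => i; apply/differentiableZ/differentiable_coord.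
Qed.

Lemma diff_dotv (v x : 'cV[R]_m) : 'd (dotv v) x = dotv v :> (_ -> _).
Proof.
have dotv_linear : linear (dotv v).
  move=> c u w; rewrite /dotv scaler_sumr -big_split /=.
  by apply: eq_bigr => i _; rewrite !mxE mulrDr scalerAr.
pose L : {linear 'cV[R]_m -> R} := HB.pack (dotv v) (GRing.isLinear.Build _ _ _ _ _ dotv_linear).
rewrite (_ : dotv v = L) // diff_lin // => y.
exact/differentiable_continuous/dotv_differentiable.
Qed.

Lemma dotv_mvt (f : 'cV[R]_m -> 'cV[R]_m) (J : 'cV[R]_m -> 'M[R]_m) (v a b : 'cV[R]_m) :
  (forall x, differentiable f x /\ forall h, 'd f x h = J x *m h) ->
  exists2 c, 0 <= c <= 1 &
    dotv v (f a) - dotv v (f b) = ((v^T *m J (c *: a + (1 - c) *: b)) *m (a - b)) 0 0.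
Proof.
move=> fJ.
pose path := ( *:%R ^~ (a - b)) + cst b : R -> 'cV[R]_m.
have pathE s : path s = s *: a + (1 - s) *: b.
  have -> : path s = s *: (a - b) + b by [].
  by rewrite scalerBr scalerBl scale1r addrCA addrC.
have path_is_diff s : is_diff s path (( *:%R ^~ (a - b)) + 0) by exact: is_diffD.
have dpath s : 'd path s 1 = a - b.
  have -> : 'd path s = ( *:%R ^~ (a - b)) + 0 :> (R -> _) by apply: diff_val.
  by rewrite /= addr0 scale1r.
have fv_diff s : differentiable (dotv v \o f) (path s).
  by apply: differentiable_comp; [exact: (fJ _).1 | exact: dotv_differentiable].
pose F := dotv v \o f \o path.
have F_diff s : differentiable F s.
  by apply: differentiable_comp => //; case: (path_is_diff s).
have dF s : 'd F s 1 = ((v^T *m J (path s)) *m (a - b)) 0 0.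
  rewrite /F diff_comp // diff_comp; [|exact: (fJ _).1|exact: dotv_differentiable].
  by rewrite /= diff_dotv (fJ _).2 dpath dotv_mulmx mulmxA.
have F_derive (s : R) : s \in `]0, 1[%R -> is_derive s 1 F ('d F s 1).
  by move=> _; apply: DeriveDef; [exact: diff_derivable | exact: deriveE].
have F_cont : {within `[0, 1], continuous F}.
  by apply: continuous_subspaceT => s; exact: differentiable_continuous.
have [c c01 Fc] := MVT_segment ler01 F_derive F_cont.
exists c; first by move: c01; rewrite in_itv.
have path1 : path 1 = a by rewrite pathE subrr scale1r scale0r addr0.
have path0 : path 0 = b by rewrite pathE subr0 scale1r scale0r add0r.
by move: Fc; rewrite subr0 mulr1 dF /F /= path1 path0 pathE.
Qed.

End MeanValue.

Section Perturbation.
Context {R : realType} {m : nat}.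

(* Split [vh^T f(a) - y] along [a = setfst bh th], [b = setfst bs th] as
   [(vh^T J(c) - M)(a - b) + M (a - b) + (vh - vs)^T f(b) + (vs^T f(b) - y)];
   the first column of [M] is irrelevant because [a - b] vanishes there. *)
Lemma score_perturbation_le (f : 'cV[R]_m.+1 -> 'cV[R]_m.+1) (J : 'cV[R]_m.+1 -> 'M[R]_m.+1)
    (vh vs bh bs E : 'cV[R]_m.+1) (M : 'rV[R]_m.+1) (th del C1 C2 y : R) :
  (forall x, differentiable f x /\ forall h, 'd f x h = J x *m h) ->
  linf (f (setfst bs th) - E) <= del ->
  `|dotv vs (f (setfst bs th)) - y| <= del ->
  (forall nu, 0 <= nu <= 1 ->
     linf (vh^T *m J (nu *: setfst bh th + (1 - nu) *: setfst bs th) - M) <= del) ->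
  linf E <= C1 -> linf (dropfirst M) <= C2 ->
  l1 (bh - bs) <= del -> l1 (vh - vs) <= del -> del <= 1 ->
  `|dotv vh (f (setfst bh th)) - y| <= del * (3 + C1 + C2).
Proof.
move=> fJ fE vsf JM EC1 MC2 bhs vhs del1.
set a := setfst bh th; set b := setfst bs th.
have [c c01 mvt] := dotv_mvt vh a b fJ.
have ab_del : l1 (a - b) <= del := le_trans (l1_setfstB _ _ _) bhs.
have del0 : 0 <= del := le_trans (l1_ge0 _) ab_del.
have split_score : dotv vh (f a) - y =
    ((vh^T *m J (c *: a + (1 - c) *: b) - M) *m (a - b)) 0 0 + (M *m (a - b)) 0 0
    + dotv (vh - vs) (f b) + (dotv vs (f b) - y).
  by rewrite dotvBl mulmxBl [X in X + _ + _ + _]mxE -mvt [X in _ - _ + X]mxE; lra.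
have B1 : `|((vh^T *m J (c *: a + (1 - c) *: b) - M) *m (a - b)) 0 0| <= del * del.
  by apply: le_trans (mulmx_rV_cV_le _ _) _; rewrite ler_pM ?linf_ge0 ?l1_ge0 ?JM.
have B2 : `|(M *m (a - b)) 0 0| <= C2 * del.
  apply: le_trans (mulmx_dropfirst_le _ (setfstB_ord0 _ _ _)) _.
  by rewrite ler_pM ?linf_ge0 ?l1_ge0.
have B3 : `|dotv (vh - vs) (f b)| <= del * (del + C1).
  apply: le_trans (dotv_le _ _) _; rewrite ler_pM ?l1_ge0 ?linf_ge0 //.
  by apply: le_trans (linf_leD _ E) _; rewrite lerD.
have C10 : 0 <= C1 := le_trans (linf_ge0 _) EC1.
rewrite split_score; set x1 := (X in `|X| <= del * del) in B1.
set x2 := (X in `|X| <= C2 * del) in B2; set x3 := dotv _ _ in B3.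
have := ler_normD (x1 + x2 + x3) (dotv vs (f b) - y).
have := ler_normD (x1 + x2) x3; have := ler_normD x1 x2.
nra.
Qed.

End Perturbation.

Section RootLocalization.
Context {R : realType}.

Lemma dist_lt_norm_mul_gt0 (a x : R) : `|a - x| < `|x| -> 0 < a * x.
Proof.
rewrite ltr_norml => /andP[lo hi].
by have [x0|x0] := leP 0 x; [rewrite ger0_norm in lo hi | rewrite ltr0_norm in lo hi]; nra.
Qed.

Lemma root_le_sign_change (f : R -> R) x e z : 0 < e -> f z = 0 ->
  (continuous f /\ (forall y, f y = 0 -> y = z)) \/ {homo f : a b / a <= b} ->
  f (x - e) * f (x + e) < 0 -> `|z - x| <= e.
Proof.
move=> e0 fz [[f_cont f_root]|f_mono] f_sign.
- have le_ends : x - e <= x + e by lra.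
  have f_cont' : {within `[x - e, x + e], continuous f}.
    by apply: continuous_subspaceT => y; exact: f_cont.
  have between : Num.min (f (x - e)) (f (x + e)) <= 0 <= Num.max (f (x - e)) (f (x + e)).
    rewrite ge_min le_max.
    have [fl|fl] := leP 0 (f (x - e)).
      have fr : f (x + e) <= 0 by nra.
      by rewrite fr orbT.
    have fr : 0 <= f (x + e) by nra.
    by rewrite fr (ltW fl) orbT.
  have [y y_in fy0] := IVT le_ends f_cont' between.
  rewrite -(f_root y fy0) ler_norml; move: y_in; rewrite in_itv /=; lra.
- have f_ends : f (x - e) <= f (x + e) by apply: f_mono; lra.
  rewrite ler_norml !lerBlDr; apply/andP; split; rewrite leNgt; apply/negP => z_out.
  + have : f z <= f (x - e) by apply: f_mono; lra.
    nra.
  + have : f (x + e) <= f z by apply: f_mono; lra.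
    nra.
Qed.

Lemma root_localization (f g : R -> R) x e z : 0 < e -> f z = 0 ->
  (continuous f /\ (forall y, f y = 0 -> y = z)) \/ {homo f : a b / a <= b} ->
  g (x - e) * g (x + e) < 0 ->
  `|f (x - e) - g (x - e)| < `|g (x - e)| -> `|f (x + e) - g (x + e)| < `|g (x + e)| ->
  `|z - x| <= e.
Proof.
move=> e0 fz f_shape g_sign /dist_lt_norm_mul_gt0 fgl /dist_lt_norm_mul_gt0 fgr.
by apply: root_le_sign_change e0 fz f_shape _; nra.
Qed.

End RootLocalization.

Section ProbabilityLimits.
Context {R : realType} {d : measure_display} {T : measurableType d}.
Variable P : probability T R.

Lemma cvg_probability_fine (A : nat -> set T) (l : R) : (forall n, measurable (A n)) ->
  (P (A n) @[n --> \oo] --> l%:E) <-> (fine (P (A n)) @[n --> \oo] --> l).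
Proof.
move=> mA; rewrite fine_cvgP; split=> [[] //|]; split=> //.
by near=> n; rewrite fin_num_measure.
Unshelve. all: by end_near.
Qed.

Lemma probability_setI_ge (A B : set T) : measurable A -> measurable B ->
  fine (P A) + fine (P B) - 1 <= fine (P (A `&` B)).
Proof.
move=> mA mB; have mAB := measurableI _ _ mA mB.
have union_le := measureU2 P (measurableC mA) (measurableC mB).
rewrite -setCI in union_le.
have : (P (~` (A `&` B)) <= P (~` A) + P (~` B))%E := union_le.
rewrite (probability_setC P mAB) (probability_setC P mA) (probability_setC P mB).
rewrite -(fineK (fin_num_measure P _ mA)) -(fineK (fin_num_measure P _ mB)).
rewrite -(fineK (fin_num_measure P _ mAB)).
by rewrite -!EFinB -EFinD lee_fin; lra.
Qed.

Lemma probability_fine_le1 (A : set T) : measurable A -> fine (P A) <= 1.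
Proof.
move=> mA; have := probability_le1 P mA.
by rewrite -(fineK (fin_num_measure P _ mA)) lee_fin.
Qed.

Lemma wpa1I (E F : nat -> set T) : wpa1 P E -> wpa1 P F -> wpa1 P (fun n => E n `&` F n).
Proof.
move=> [A [mA [AE PA]]] [B [mB [BF PB]]].
have mAB n : measurable (A n `&` B n) := measurableI _ _ (mA n) (mB n).
exists (fun n => A n `&` B n); split=> //; split; first by move=> n w [/AE ? /BF].
apply/cvg_probability_fine => //.
move/cvg_probability_fine: PA => /(_ mA) PA; move/cvg_probability_fine: PB => /(_ mB) PB.
apply: (@squeeze_cvgr _ _ _ _ (fun n => fine (P (A n)) + fine (P (B n)) - 1) (fun=> 1)).
- by near=> n; rewrite probability_setI_ge ?probability_fine_le1.
- by rewrite -[X in _ --> X](addrK 1); apply: cvgB => //; [apply: cvgD | exact: cvg_cst].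
- exact: cvg_cst.
Unshelve. all: by end_near.
Qed.

Lemma wpa1_eventually (E F : nat -> set T) :
  wpa1 P E -> (\forall n \near \oo, E n `<=` F n) -> wpa1 P F.
Proof.
move=> [A [mA [AE PA]]] [n0 _ EF].
exists (fun n => if (n0 <= n)%N then A n else set0); split.
  by move=> n; case: ifP.
split; first by move=> n; case: ifP => [n0n w Aw|_ w []]; exact: EF n n0n w (AE n w Aw).
by apply: cvg_trans PA; apply: near_eq_cvg; near=> n; rewrite ifT //; near: n; exists n0.
Unshelve. all: by end_near.
Qed.

Lemma prob_to0_wpa1 (E F : nat -> set T) :
  wpa1 P E -> (forall n, E n `<=` ~` F n) -> prob_to0 P F.
Proof.
move=> [A [mA [AE PA]]] EF.
exists (fun n => ~` A n); split; first by move=> n; exact: measurableC.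
split; first by move=> n w Fw Aw; exact: EF _ _ (AE _ _ Aw) Fw.
apply/cvg_probability_fine => [n|]; first exact: measurableC.
move/cvg_probability_fine: PA => /(_ mA) PA.
under eq_fun do rewrite (probability_setC P (mA _)) -(fineK (fin_num_measure P _ (mA _))) -EFinB /=.
by rewrite -(subrr 1); apply: cvgB => //; exact: cvg_cst.
Qed.

End ProbabilityLimits.

Lemma ereal_sup_cvg0_lt {R : realType} {I : Type} {F : set_system I} {FF : Filter F}
    (N : set R) (r : I -> R -> R) x del :
  (fun i => ereal_sup [set (r i y)%:E | y in N]) @ F --> 0%E -> N x -> 0 < del ->
  \forall i \near F, r i x < del.
Proof.
move=> /fine_cvgP[sup_fin sup_cvg] Nx del0.
near=> i; apply: (@le_lt_trans _ _ (fine (ereal_sup [set (r i y)%:E | y in N]))).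
  have fin : ereal_sup [set (r i y)%:E | y in N] \is a fin_num by near: i.
  by rewrite -lee_fin fineK //; apply: ereal_sup_ubound; exists x.
by near: i; exact: (cvgr_lt _ sup_cvg _ del0).
Unshelve. all: by end_near.
Qed.

Lemma nbhs_sym_pts {R : realType} (N : set R) x eps : nbhs x N -> 0 < eps ->
  exists e, [/\ 0 < e, e <= eps, N (x - e) & N (x + e)].
Proof.
move=> /nbhs_ballP[rr rr0 ballN] eps0.
set e := Num.min eps (rr / 2).
have e0 : 0 < e by rewrite lt_min eps0 divr_gt0.
have e_rr : e < rr.
  have : e <= rr / 2 by rewrite ge_min lexx orbT.
  lra.
exists e; split; rewrite ?ge_min ?lexx //; apply: ballN; rewrite /ball /=.
- by rewrite opprB addrC subrK gtr0_norm.
- by rewrite opprD addNKr normrN gtr0_norm.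
Qed.

Section ScoreConcentration.
(* Otherwise the index [n] of the data below would become implicit. *)
Local Unset Implicit Arguments.
Context {R : realType} {dsp : measure_display} {Omega : measurableType dsp}.
Context {P : probability Omega R} {q : nat} {k : nat -> nat}.
Context {Z : forall n : nat, Omega -> 'M[R]_(n, q)}
  {t : forall n : nat, 'M[R]_(n, q) -> 'cV[R]_((k n).+1) -> 'cV[R]_((k n).+1)}
  {T : forall n : nat, 'M[R]_(n, q) -> 'cV[R]_((k n).+1) -> 'M[R]_((k n).+1)}
  {Et : forall n : nat, 'cV[R]_((k n).+1) -> 'cV[R]_((k n).+1)}
  {ET : forall n : nat, 'cV[R]_((k n).+1) -> 'M[R]_((k n).+1)}
  {bstar : forall n : nat, 'cV[R]_((k n).+1)} {g : R -> R}
  {bhat vhat : forall n : nat, Omega -> 'cV[R]_((k n).+1)}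
  {N : set R} {r1 r2 r3 : nat -> R -> R} {r4 r5 : nat -> R}.
Hypothesis Hdiff : forall n z b, differentiable (t n z) b /\
  (forall h, 'd (t n z) b h = T n z b *m h).
Hypothesis Hg : forall n th,
  dotv (first_row_inv (ET n (bstar n))) (Et n (setfst (bstar n) th)) = g th.
Hypothesis Hr : (fun n => ereal_sup [set (Num.max (r1 n th) (Num.max (r2 n th) (r3 n th)))%:E
  | th in N]) @ \oo --> 0%E.
Hypothesis Hc1 : forall th, N th -> wpa1 P (fun n => [set w |
  linf (t n (Z n w) (setfst (bstar n) th) - Et n (setfst (bstar n) th)) <= r1 n th]).
Hypothesis Hc2 : forall th, N th -> wpa1 P (fun n => [set w |
  `| dotv (first_row_inv (ET n (bstar n))) (t n (Z n w) (setfst (bstar n) th))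
     - dotv (first_row_inv (ET n (bstar n))) (Et n (setfst (bstar n) th)) | <= r2 n th]).
Hypothesis Hc3 : forall th, N th -> wpa1 P (fun n => [set w |
  forall nu : R, 0 <= nu <= 1 ->
    linf ((vhat n w)^T *m T n (Z n w) (nu *: setfst (bhat n w) th + (1 - nu) *: setfst (bstar n) th)
          - (first_row_inv (ET n (bstar n)))^T *m ET n (setfst (bstar n) th)) <= r3 n th]).
Hypothesis HEt : exists C : R, forall n th, N th -> linf (Et n (setfst (bstar n) th)) <= C.
Hypothesis HET : exists C : R, forall n th, N th ->
  linf (dropfirst ((first_row_inv (ET n (bstar n)))^T *m ET n (setfst (bstar n) th))) <= C.
Hypothesis Hr45 : (fun n => Num.max (r4 n) (r5 n)) @ \oo --> 0.
Hypothesis Hl1b : wpa1 P (fun n => [set w | l1 (bhat n w - bstar n) <= r4 n]).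
Hypothesis Hl1v : wpa1 P (fun n => [set w |
  l1 (vhat n w - first_row_inv (ET n (bstar n))) <= r5 n]).

Lemma score_close_wpa1 th : N th -> g th != 0 -> wpa1 P (fun n => [set w |
  `|dotv (vhat n w) (t n (Z n w) (setfst (bhat n w) th)) - g th| < `|g th|]).
Proof.
move=> Nth gth0.
have [C1 EC1] := HEt; have [C2 MC2] := HET.
have C10 : 0 <= C1 := le_trans (linf_ge0 _) (EC1 0%N _ Nth).
have C20 : 0 <= C2 := le_trans (linf_ge0 _) (MC2 0%N _ Nth).
set K := 3 + C1 + C2; have K0 : 0 < K by rewrite /K; lra.
set del := Num.min 1 (`|g th| / (2 * K)).
have del0 : 0 < del by rewrite lt_min ltr01 divr_gt0 ?normr_gt0 ?mulr_gt0.
have del1 : del <= 1 by rewrite ge_min lexx.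
have delK : del * K < `|g th|.
  have : del * (2 * K) <= `|g th| by rewrite -ler_pdivlMr ?mulr_gt0 // ge_min lexx orbT.
  have : 0 < `|g th| by rewrite normr_gt0.
  nra.
have r123_small := ereal_sup_cvg0_lt Hr Nth del0.
have r45_small := cvgr_lt _ Hr45 _ del0.
have W := wpa1I (Hc1 _ Nth) (wpa1I (Hc2 _ Nth) (wpa1I (Hc3 _ Nth) (wpa1I Hl1b Hl1v))).
apply: (wpa1_eventually W).
near=> n.
have /and3P[r1n r2n r3n] : [&& r1 n th < del, r2 n th < del & r3 n th < del].
  by rewrite -!gt_max; near: n; exact: r123_small.
have /andP[r4n r5n] : (r4 n < del) && (r5 n < del) by rewrite -gt_max; near: n; exact: r45_small.
move=> w /= [c1 [c2 [c3 [cb cv]]]].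
apply: le_lt_trans delK; apply: (score_perturbation_le (Hdiff n (Z n w))).
- exact: le_trans c1 (ltW r1n).
- by rewrite -(Hg n th); exact: le_trans c2 (ltW r2n).
- by move=> nu nu01; exact: le_trans (c3 nu nu01) (ltW r3n).
- exact: EC1.
- exact: MC2.
- exact: le_trans cb (ltW r4n).
- exact: le_trans cv (ltW r5n).
- exact: del1.
Unshelve. all: by end_near.
Qed.

End ScoreConcentration.
Theorem theorem1
  (R : realType) (dsp : measure_display) (Omega : measurableType dsp)
  (P : probability Omega R)                          (* the true law P^* *)
  (q : nat) (k : nat -> nat)                         (* d = d_n = (k n).+1 *)
  (Z : forall n : nat, Omega -> 'M[R]_(n, q))        (* data *)
  (t : forall n : nat, 'M[R]_(n, q) -> 'cV[R]_((k n).+1) -> 'cV[R]_((k n).+1))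
  (T : forall n : nat, 'M[R]_(n, q) -> 'cV[R]_((k n).+1) -> 'M[R]_((k n).+1))
  (Et : forall n : nat, 'cV[R]_((k n).+1) -> 'cV[R]_((k n).+1))
  (ET : forall n : nat, 'cV[R]_((k n).+1) -> 'M[R]_((k n).+1))
  (bstar : forall n : nat, 'cV[R]_((k n).+1)) (thstar : R)
  (g : R -> R)                                       (* theta |-> v*^T E_t(beta*_theta) *)
  (lam lam' : nat -> R)
  (bhat vhat : forall n : nat, Omega -> 'cV[R]_((k n).+1))
  (thtil : nat -> Omega -> R)
  (N : set R) (r1 r2 r3 : nat -> R -> R) (r4 r5 : nat -> R)
  (* t twice differentiable in beta, with T = dt/dbeta *)
  (Hdiff : forall n z b, differentiable (t n z) b /\
                         (forall h, 'd (t n z) b h = T n z b *m h))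
  (Hdiff2 : forall n z b, differentiable (T n z) b)
  (* beta^* : unique root of E_t ; E_T at beta^* invertible *)
  (Hroot : forall n, Et n (bstar n) = 0)
  (Huniq : forall n b, Et n b = 0 -> b = bstar n)
  (Hinv : forall n, ET n (bstar n) \in unitmx)
  (Hthstar : forall n, bstar n ord0 0 = thstar)
  (* the population quantity v*^T E_t(beta*_theta) does not depend on n *)
  (Hg : forall n th,
      dotv (first_row_inv (ET n (bstar n))) (Et n (setfst (bstar n) th)) = g th)
  (* estimators *)
  (Hlam : forall n, 0 < lam n) (Hlam' : forall n, 0 < lam' n)
  (Hbhat : forall n w,
      linf (t n (Z n w) (bhat n w)) <= lam n /\
      (forall b, linf (t n (Z n w) b) <= lam n -> l1 (bhat n w) <= l1 b))
  (Hvhat : forall n w,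
      linf ((vhat n w)^T *m T n (Z n w) (bhat n w) - e1) <= lam' n /\
      (forall v : 'cV[R]_((k n).+1),
          linf (v^T *m T n (Z n w) (bhat n w) - e1) <= lam' n ->
          l1 (vhat n w) <= l1 v))
  (* theta~ is a root of theta |-> S^(beta^_theta); the map is continuous with a
     single root, or non-decreasing *)
  (Hthtil : forall n w,
      let f := fun th => dotv (vhat n w) (t n (Z n w) (setfst (bhat n w) th)) in
      f (thtil n w) = 0 /\
      ((continuous f /\ (forall th, f th = 0 -> th = thtil n w))
       \/ {homo f : x y / x <= y}))
  (* Concentration Assumption *)
  (HN : nbhs thstar N)
  (Hr : (fun n => ereal_sup [set (Num.max (r1 n th) (Num.max (r2 n th) (r3 n th)))%:E
                             | th in N]) @ \oo --> 0%E)
  (Hc1 : forall th, N th -> wpa1 P (fun n => [set w |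
      linf (t n (Z n w) (setfst (bstar n) th) - Et n (setfst (bstar n) th))
        <= r1 n th]))
  (Hc2 : forall th, N th -> wpa1 P (fun n => [set w |
      `| dotv (first_row_inv (ET n (bstar n))) (t n (Z n w) (setfst (bstar n) th))
         - dotv (first_row_inv (ET n (bstar n))) (Et n (setfst (bstar n) th)) |
        <= r2 n th]))
  (Hc3 : forall th, N th -> wpa1 P (fun n => [set w |
      forall nu : R, 0 <= nu <= 1 ->
        linf ((vhat n w)^T *m
                T n (Z n w) (nu *: setfst (bhat n w) th
                             + (1 - nu) *: setfst (bstar n) th)
              - (first_row_inv (ET n (bstar n)))^T *m ET n (setfst (bstar n) th))
        <= r3 n th]))
  (HEt : exists C : R, forall n th, N th ->
      linf (Et n (setfst (bstar n) th)) <= C)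
  (HET : exists C : R, forall n th, N th ->
      linf (dropfirst ((first_row_inv (ET n (bstar n)))^T
                       *m ET n (setfst (bstar n) th))) <= C)
  (* L1-Consistency Assumption *)
  (Hr45 : (fun n => Num.max (r4 n) (r5 n)) @ \oo --> 0)
  (Hl1b : wpa1 P (fun n => [set w | l1 (bhat n w - bstar n) <= r4 n]))
  (Hl1v : wpa1 P (fun n => [set w |
      l1 (vhat n w - first_row_inv (ET n (bstar n))) <= r5 n]))
  (* sign change of the population score *)
  (Hsign : forall eps : R, 0 < eps -> g (thstar - eps) * g (thstar + eps) < 0) :
  forall eps : R, 0 < eps ->
    prob_to0 P (fun n => [set w | `| thtil n w - thstar | > eps]).
Proof.
move=> eps eps0.
have [e [e0 e_eps Nl Nr]] := nbhs_sym_pts HN eps0.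
have g_sign := Hsign e e0.
have score_close th := score_close_wpa1 Hdiff Hg Hr Hc1 Hc2 Hc3 HEt HET Hr45 Hl1b Hl1v th.
have [gl gr] : g (thstar - e) != 0 /\ g (thstar + e) != 0.
  by split; apply/eqP => g0; move: g_sign; rewrite g0 ?mul0r ?mulr0 ltxx.
apply: (prob_to0_wpa1 (wpa1I (score_close _ Nl gl) (score_close _ Nr gr))).
move=> n w [/= close_l close_r]; apply/negP; rewrite -leNgt.
have [root0 shape] := Hthtil n w.
exact: le_trans (root_localization e0 root0 shape g_sign close_l close_r) e_eps.
Qed.
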